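(* Let $\mathcal{H}_A,\mathcal{H}_B,\mathcal{H}_C$ be finite-dimensional Hilbert spaces with $d_A=\dim\mathcal{H}_A$, let $\rho_{ABC}$ be pure, let $Z=\{|j\rangle\}_{j=1}^{d_A}$ be an orthonormal basis of $\mathcal{H}_A$, and let $\mathcal{S}_Z$ be the set of pure states $|\psi\rangle\in\mathcal{H}_A$ unbiased w.r.t. $Z$, i.e. of the form $|\psi\rangle=\sum_j \frac{e^{i\phi_j}}{\sqrt{d_A}}|j\rangle$. Then $$d_A^2\,\big\langle \mathrm{Tr}\big[\mathcal{T}_B(|\psi\rangle\langle\psi|)^2\big]\big\rangle_{\mathcal{S}_Z}=\mathrm{Tr}(\rho_B^2)+H_Q(Z|C),$$ where $\langle\cdot\rangle_{\mathcal{S}_Z}$ is the average over $|\psi\rangle\in\mathcal{S}_Z$ with the phases $\phi_j$ independent and uniformly distributed on $[0,2\pi)$.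
   Context: $\mathcal{T}_B$ is the linear map from operators on $\mathcal{H}_A$ to operators on $\mathcal{H}_B$ given by $\mathcal{T}_B(X)=\mathrm{Tr}_A[(X\otimes I_B)\rho_{AB}]$, with $\rho_{AB}=\mathrm{Tr}_C\rho_{ABC}$. $H_Q(Z|C)=\mathrm{Tr}(\rho_C^2)-\mathrm{Tr}(\tilde\rho_{M_ZC}^2)$, where $\tilde\rho_{M_ZC}=\sum_j|j\rangle\langle j|_{M_Z}\otimes\mathrm{Tr}_A[(|j\rangle\langle j|\otimes I_C)\rho_{AC}]$ for a register $M_Z$ with orthonormal basis $\{|j\rangle\}$; equivalently $H_Q(Z|C)=\mathrm{Tr}(\rho_C^2)-\sum_j\mathrm{Tr}\big[(\mathrm{Tr}_A[(|j\rangle\langle j|\otimes I_C)\rho_{AC}])^2\big]$. *)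

From mathcomp Require Import all_boot all_algebra complex.
From mathcomp Require Import all_classical all_reals all_analysis.
Set Implicit Arguments. Unset Strict Implicit. Unset Printing Implicit Defensive.
Import GRing.Theory Num.Theory.
Local Open Scope ring_scope.

Section QDefs.
Variable R : realType.
Local Notation C := R[i].

(* Linear operators on the Hilbert space C^I, I a finite index type
   (orthonormal basis), represented by their matrix entries. *)
Definition op (I : finType) := I -> I -> C.

Definition tr (I : finType) (X : op I) : C := \sum_i X i i.

Definition opmul (I : finType) (X Y : op I) : op I :=
  fun i k => \sum_j X i j * Y j k.

Definition tens (I J : finType) (X : op I) (Y : op J) : op (I * J)%type :=
  fun p q => X p.1 q.1 * Y p.2 q.2.

Definition idop (I : finType) : op I := fun i j => (i == j)%:R.

Definition ptr1 (I J : finType) (X : op (I * J)%type) : op J :=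
  fun j j' => \sum_i X (i, j) (i, j').

Definition ptr2 (I J : finType) (X : op (I * J)%type) : op I :=
  fun i i' => \sum_j X (i, j) (i', j).

Definition ketbra (I : finType) (v : I -> C) : op I :=
  fun i i' => v i * (v i')^*.

Definition proj (I : finType) (j : I) : op I :=
  fun i i' => ((i == j) && (i' == j))%:R.

Section Tripartite.
Variables (dA dB dC : nat).
Local Notation IA := 'I_dA.
Local Notation IB := 'I_dB.
Local Notation IC := 'I_dC.

Definition rhoABC (Psi : ((IA * IB) * IC)%type -> C) : op ((IA * IB) * IC)%type :=
  ketbra Psi.

Definition rhoAB Psi : op (IA * IB)%type := ptr2 (rhoABC Psi).

Definition rhoAC Psi : op (IA * IC)%type :=
  fun p q => \sum_b rhoABC Psi ((p.1, b), p.2) ((q.1, b), q.2).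

Definition rhoB Psi : op IB := ptr1 (rhoAB Psi).
Definition rhoC Psi : op IC := ptr1 (rhoAC Psi).

Definition TB Psi (X : op IA) : op IB :=
  ptr1 (opmul (tens X (@idop IB)) (rhoAB Psi)).

Definition HQ Psi : C :=
  tr (opmul (rhoC Psi) (rhoC Psi)) -
  \sum_(j : IA)
     (let M := ptr1 (opmul (tens (proj j) (@idop IC)) (rhoAC Psi)) in
      tr (opmul M M)).

Definition normalized (Psi : ((IA * IB) * IC)%type -> C) : Prop :=
  \sum_p `|Psi p| ^+ 2 = 1.
End Tripartite.

(* Average of F over phases phi_0, ..., phi_(n-1) independent and uniformly
   distributed on [0, 2 pi), computed as the iterated integral
   (2 pi)^-1 \int_[0,2pi) ... (2 pi)^-1 \int_[0,2pi) F(phi) dphi_(n-1) ... dphi_0 ;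
   coordinates >= n are set to 0. *)
Fixpoint phase_avg (n : nat) (F : (nat -> R) -> R) : R :=
  match n with
  | 0 => F (fun _ => 0)
  | n'.+1 =>
      (2 * pi)^-1 *
      Rintegral (@lebesgue_measure R) `[0, 2 * pi[%classic
        (fun t => phase_avg n'
           (fun phi => F (fun k => if k == n' then t else phi k)))
  end.

Definition cphase_avg (n : nat) (F : (nat -> R) -> C) : C :=
  Complex (phase_avg n (fun phi => complex.Re (F phi)))
          (phase_avg n (fun phi => complex.Im (F phi))).

Definition expi (t : R) : C := Complex (cos t) (sin t).

Definition unbiased (dA : nat) (phi : nat -> R) : 'I_dA -> C :=
  fun j => expi (phi (nat_of_ord j)) / Complex (Num.sqrt (dA%:R : R)) 0.

End QDefs.

(* Expand Tr[T_B(|psi><psi|)^2] as a trigonometric polynomial in the phases: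
   with |psi> = d_A^(-1/2) sum_j e^(i phi_j) |j>, every term carries the factor
   e^(i (phi_a1 - phi_a1' + phi_a2 - phi_a2')) / d_A^2, whose average over the
   phases is 1 if {a1, a2} = {a1', a2'} as multisets and 0 otherwise.  The
   surviving terms with a1 = a1', a2 = a2' add up to Tr rho_B^2, those with
   a1 = a2', a2 = a1' to Tr rho_AB^2, which equals Tr rho_C^2 since rho_ABC is
   pure, and the diagonal a1 = a1' = a2 = a2', counted twice, accounts for the
   subtracted term of H_Q(Z|C). *)

From Pilot Require Import Defs.
From mathcomp Require Import all_boot all_algebra complex.
From mathcomp Require Import all_classical all_reals all_analysis.
From mathcomp Require Import ring zify.
Set Implicit Arguments. Unset Strict Implicit. Unset Printing Implicit Defensive.
Import GRing.Theory Num.Theory numFieldNormedType.Exports.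
Local Open Scope ring_scope.

Section Fourier.
Variable R : realType.
Local Notation C := R[i].
Local Notation mu := (@lebesgue_measure R).

Lemma expi0 : expi 0 = 1 :> C.
Proof. by rewrite /expi cos0 sin0. Qed.

Lemma expiD (x y : R) : expi (x + y) = expi x * expi y.
Proof. by rewrite /expi cosD sinD; congr Complex; ring. Qed.

Lemma conj_expi (x : R) : (expi x)^* = expi (- x) :> C.
Proof. by rewrite /expi cosN sinN. Qed.

Lemma Re_mul_expi (c : C) (x : R) :
  complex.Re (c * expi x) = complex.Re c * cos x - complex.Im c * sin x.
Proof. by case: c. Qed.

Lemma sin_intr_mul2pi (z : int) : sin (z%:~R * (2 * pi)) = 0 :> R.
Proof.
have sin_nat (n : nat) : sin (n%:R * (2 * pi)) = 0 :> R.
  by rewrite mulr_natl mulr_natl -[X in sin X]add0r (periodicn (@sinD2pi R)) sin0.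
by case: z => n; rewrite ?NegzE ?mulrNz ?mulNr ?sinN pmulrn sin_nat ?oppr0.
Qed.

Lemma cos_intr_mul2pi (z : int) : cos (z%:~R * (2 * pi)) = 1 :> R.
Proof.
have cos_nat (n : nat) : cos (n%:R * (2 * pi)) = 1 :> R.
  by rewrite mulr_natl mulr_natl -[X in cos X]add0r (periodicn (@cosD2pi R)) cos0.
by case: z => n; rewrite ?NegzE ?mulrNz ?mulNr ?cosN pmulrn cos_nat.
Qed.

Lemma continuous_Re_mul_expi (c : C) (m : R) :
  continuous (fun t => complex.Re (c * expi (m * t))).
Proof.
have cm : continuous (fun t : R => m * t).
  by move=> x; apply: continuousM; [exact: cst_continuous | exact: cvg_id].
under eq_fun do rewrite Re_mul_expi.
move=> x; apply: cvgB; apply: cvgM; do ?exact: cvg_cst.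
- exact: (continuous_comp (cm x) (@continuous_cos R _)).
- exact: (continuous_comp (cm x) (@continuous_sin R _)).
Qed.

Lemma integrable_continuous_itv (a b : R) (f : R -> R) :
  continuous f -> mu.-integrable `[a, b[%classic (EFin \o f).
Proof.
move=> cf; apply: (@integrableS _ _ _ mu `[a, b]%classic) => //.
  by apply: subset_itvl; rewrite bnd_simp.
apply: continuous_compact_integrable; first exact: segment_compact.
exact/continuous_subspaceT.
Qed.

Lemma Rintegral_sum d (T : measurableType d) (nu : measure T R) (D : set T)
    (I : Type) (r : seq I) (f : I -> T -> R) :
  measurable D -> (forall i, nu.-integrable D (EFin \o f i)) ->
  Rintegral nu D (fun x => \sum_(i <- r) f i x) = \sum_(i <- r) Rintegral nu D (f i).
Proof.
move=> mD intf; elim: r => [|i r IH].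
  by under eq_fun do rewrite big_nil; rewrite Rintegral_cst // mul0r big_nil.
under eq_fun do rewrite big_cons; rewrite RintegralD // ?IH ?big_cons //.
have -> : EFin \o (fun x => \sum_(j <- r) f j x) = fun x => \sum_(j <- r) (EFin \o f j) x.
  by apply/funext => x; rewrite /= sumEFin.
exact: integrable_sum.
Qed.

Lemma Rintegral_Re_mul_expi (c : C) (z : int) :
  Rintegral mu `[0, 2 * pi[%classic (fun t => complex.Re (c * expi (z%:~R * t)))
  = 2 * pi * (complex.Re c * (z == 0)%:R).
Proof.
have pi2_gt0 : 0 < 2 * pi :> R by rewrite mulr_gt0 ?pi_gt0.
rewrite Rintegral_itv_bndo_bndc; last exact/integrable_continuous_itv/continuous_Re_mul_expi.
have [->|z0] := eqVneq z 0.
  rewrite (_ : (fun t => _) = fun=> complex.Re c); last first.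
    by apply/funext => t; rewrite mulr0z mul0r expi0 mulr1.
  by rewrite Rintegral_cst //= lebesgue_measure_itv /= lte_fin pi2_gt0 /= subr0 mulr1 mulrC.
rewrite mulr0n !mulr0.
set m : R := z%:~R; have m0 : m != 0 by rewrite intr_eq0.
set a := complex.Re c; set b := complex.Im c.
pose F t := (a * sin (m * t) + b * cos (m * t)) / m.
have dF (x : R) : is_derive x 1 F (complex.Re (c * expi (m * x))).
  have dm : is_derive x 1 (fun t : R => m * t) m.
    by apply: trigger_derive; rewrite /GRing.scale /= mulr1.
  have : is_derive x 1 (fun t => sin (m * t)) (cos (m * x) * m).
    exact: (is_derive1_comp (f := sin) (g := fun t => m * t)).
  have : is_derive x 1 (fun t => cos (m * t)) (- sin (m * x) * m).
    exact: (is_derive1_comp (f := cos) (g := fun t => m * t)).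
  move=> ? ?; apply: trigger_derive; rewrite Re_mul_expi scaler0 add0r /GRing.scale /=.
  by field.
have cF : continuous F.
  by move=> x; apply/differentiable_continuous/derivable1_diffP; case: (dF x).
rewrite /Rintegral (@continuous_FTC2 _ _ F) //.
- by rewrite -EFinB /F mulr0 sin0 cos0 /m sin_intr_mul2pi cos_intr_mul2pi subrr.
- exact/continuous_subspaceT/continuous_Re_mul_expi.
- split; first by move=> x _; case: (dF x).
  + exact/cvg_at_right_filter/cF.
  + exact/cvg_at_left_filter/cF.
- by move=> x _; rewrite derive1E derive_val.
Qed.

Definition phase_comb (n : nat) (w : nat -> int) (phi : nat -> R) : R :=
  \sum_(k < n) (w k)%:~R * phi k.

Lemma phase_comb_set (n : nat) (w : nat -> int) (phi : nat -> R) (t : R) :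
  phase_comb n.+1 w (fun k => if k == n then t else phi k)
  = phase_comb n w phi + (w n)%:~R * t.
Proof.
rewrite /phase_comb big_ord_recr /= eqxx; congr (_ + _).
by apply: eq_bigr => k _; rewrite ltn_eqF.
Qed.

Lemma forall_ord_recr (n : nat) (P : pred nat) :
  [forall k : 'I_n.+1, P k] = [forall k : 'I_n, P k] && P n.
Proof.
apply/forallP/andP => [H|[/forallP H1 H2] k].
  by split; [apply/forallP => k; exact: (H (widen_ord (leqnSn n) k)) | exact: (H ord_max)].
have [lt_kn|ge_kn] := ltnP k n; first exact: (H1 (Ordinal lt_kn)).
by have /eqP -> : (k : nat) == n by rewrite eqn_leq ge_kn -ltnS ltn_ord.
Qed.

Lemma Re_sum (I : finType) (f : I -> C) :
  complex.Re (\sum_i f i) = \sum_i complex.Re (f i).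
Proof. by apply: (big_morph (@complex.Re R)) => // -[? ?] [? ?]. Qed.

Lemma phase_avg_Re_expi (n : nat) (I : finType) (c : I -> C) (w : I -> nat -> int) :
  phase_avg n (fun phi => complex.Re (\sum_i c i * expi (phase_comb n (w i) phi)))
  = complex.Re (\sum_i c i * [forall k : 'I_n, w i k == 0]%:R).
Proof.
elim: n I c w => [|n IH] I c w /=.
  congr complex.Re; apply: eq_bigr => i _.
  by rewrite /phase_comb big_ord0 expi0 (_ : [forall k : 'I_0, _]) //; apply/forallP => -[].
have -> : (fun t => phase_avg n (fun phi => complex.Re (\sum_i c i *
      expi (phase_comb n.+1 (w i) (fun k => if k == n then t else phi k)))))
    = (fun t => \sum_i complex.Re ((c i * [forall k : 'I_n, w i k == 0]%:R) *
      expi ((w i n)%:~R * t))).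
  apply/funext => t; under eq_fun do under eq_bigr do
    rewrite phase_comb_set addrC expiD mulrA.
  by rewrite IH Re_sum; apply: eq_bigr => i _; rewrite mulrAC.
rewrite Rintegral_sum //; last by move=> i; apply/integrable_continuous_itv/continuous_Re_mul_expi.
rewrite Re_sum mulr_sumr; apply: eq_bigr => i _.
rewrite Rintegral_Re_mul_expi mulKf; last by rewrite mulf_neq0 // lt0r_neq0 // pi_gt0.
rewrite (forall_ord_recr n (fun k => w i k == 0)).
by case: [forall _, _]; case: (_ == 0); rewrite /= ?mulr1 ?mulr0.
Qed.

Lemma cphase_avg_expi (n : nat) (I : finType) (c : I -> C) (w : I -> nat -> int) :
  cphase_avg n (fun phi => \sum_i c i * expi (phase_comb n (w i) phi))
  = \sum_i c i * [forall k : 'I_n, w i k == 0]%:R.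
Proof.
have ImE (z : C) : complex.Im z = complex.Re (- 'i%C * z).
  by case: z => a b /=; ring.
rewrite /cphase_avg /= phase_avg_Re_expi.
rewrite (_ : (fun phi => complex.Im _) = fun phi =>
    complex.Re (\sum_i (- 'i%C * c i) * expi (phase_comb n (w i) phi))); last first.
  by apply/funext => phi; rewrite ImE mulr_sumr; under eq_bigr do rewrite mulrA.
rewrite phase_avg_Re_expi.
rewrite -(eq_bigr _ (fun i _ => mulrA _ _ _)) -mulr_sumr -ImE.
by case: (\sum_i _).
Qed.

End Fourier.

Section Pairing.
Variable R : realType.
Local Notation C := R[i].

(* Inclusion-exclusion: the two events overlap exactly when all four indices agree. *)
Lemma pairing_indicator (T : eqType) (x1 x1' x2 x2' : T) :
  ((x1 == x1') && (x2 == x2') || (x1 == x2') && (x2 == x1'))%:R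
  = (x1 == x1')%:R * (x2 == x2')%:R + (x1 == x2')%:R * (x2 == x1')%:R
    - (x1 == x1')%:R * (x2 == x2')%:R * (x1 == x2)%:R :> C.
Proof.
have [<-|_] := eqVneq x1 x1'; have [<-|_] := eqVneq x2 x2';
  rewrite ?eqxx ?(eq_sym x2 x1) /=.
all: try by rewrite -mulnb natrM; ring.
by case: (x1 == x2); rewrite ?mulr1n ?mulr0n; ring.
Qed.

Lemma sum_mul_eq (I : finType) (i : I) (F : I -> C) : \sum_j F j * (i == j)%:R = F i.
Proof.
rewrite (bigD1 i) //= eqxx mulr1 big1 ?addr0 // => j ne_ji.
by rewrite eq_sym (negbTE ne_ji) mulr0.
Qed.

Lemma sum_collapse_id (I : finType) (P : I -> I -> I -> I -> C) :
  \sum_a1 \sum_a1' \sum_a2 \sum_a2' P a1 a1' a2 a2' * ((a1 == a1')%:R * (a2 == a2')%:R)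
  = \sum_a1 \sum_a2 P a1 a1 a2 a2.
Proof.
apply: eq_bigr => a1 _.
under eq_bigr do under eq_bigr do under eq_bigr do rewrite mulrA.
under eq_bigr do under eq_bigr do rewrite sum_mul_eq.
by under eq_bigr do rewrite -mulr_suml; rewrite sum_mul_eq.
Qed.

Lemma sum_collapse_swap (I : finType) (P : I -> I -> I -> I -> C) :
  \sum_a1 \sum_a1' \sum_a2 \sum_a2' P a1 a1' a2 a2' * ((a1 == a2')%:R * (a2 == a1')%:R)
  = \sum_a1 \sum_a2 P a1 a2 a2 a1.
Proof.
apply: eq_bigr => a1 _.
under eq_bigr do under eq_bigr do under eq_bigr do rewrite mulrA mulrAC.
under eq_bigr do under eq_bigr do rewrite sum_mul_eq.
by rewrite exchange_big; under eq_bigr do rewrite sum_mul_eq.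
Qed.

Lemma sum_collapse_diag (I : finType) (P : I -> I -> I -> I -> C) :
  \sum_a1 \sum_a1' \sum_a2 \sum_a2'
    P a1 a1' a2 a2' * ((a1 == a1')%:R * (a2 == a2')%:R * (a1 == a2)%:R)
  = \sum_a P a a a a.
Proof.
transitivity (\sum_a1 \sum_a2 P a1 a1 a2 a2 * (a1 == a2)%:R).
  rewrite -(@sum_collapse_id I (fun a1 a1' a2 a2' => P a1 a1' a2 a2' * (a1 == a2)%:R)).
  by do 4!(apply: eq_bigr => ? _); rewrite mulrA mulrAC.
by apply: eq_bigr => a _; rewrite sum_mul_eq.
Qed.

Lemma sum_pairing (I : finType) (P : I -> I -> I -> I -> C) :
  \sum_a1 \sum_a1' \sum_a2 \sum_a2'
    P a1 a1' a2 a2' * ((a1 == a1') && (a2 == a2') || (a1 == a2') && (a2 == a1'))%:R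
  = \sum_a1 \sum_a2 P a1 a1 a2 a2 + \sum_a1 \sum_a2 P a1 a2 a2 a1 - \sum_a P a a a a.
Proof.
under eq_bigr do under eq_bigr do under eq_bigr do under eq_bigr do
  rewrite pairing_indicator mulrBr mulrDr.
under eq_bigr do under eq_bigr do under eq_bigr do rewrite sumrB big_split.
under eq_bigr do under eq_bigr do rewrite sumrB big_split.
under eq_bigr do rewrite sumrB big_split.
by rewrite sumrB big_split sum_collapse_id sum_collapse_swap sum_collapse_diag.
Qed.

Definition freq (x1 x1' x2 x2' : nat) (k : nat) : int :=
  (k == x1)%:Z - (k == x1')%:Z + (k == x2)%:Z - (k == x2')%:Z.

Lemma phase_comb_freq (n : nat) (phi : nat -> R) (a1 a1' a2 a2' : 'I_n) :
  phase_comb n (freq a1 a1' a2 a2') phi = (phi a1 - phi a1') + (phi a2 - phi a2').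
Proof.
have dirac (x : 'I_n) : \sum_(k < n) ((k : nat) == x)%:Z%:~R * phi k = phi x.
  rewrite (bigD1 x) //= eqxx mul1r big1 ?addr0 // => k ne_kx.
  by rewrite (negbTE (ne_kx : (k : nat) != x)) mul0r.
rewrite /phase_comb /freq.
under eq_bigr do rewrite intrB intrD intrB mulrBl mulrDl mulrBl.
by rewrite sumrB big_split sumrB /= !dirac addrA.
Qed.

Lemma freq_eq0 (n : nat) (a1 a1' a2 a2' : 'I_n) :
  [forall k : 'I_n, freq a1 a1' a2 a2' k == 0]
  = (a1 == a1') && (a2 == a2') || (a1 == a2') && (a2 == a1').
Proof.
apply/forallP/idP => [F0 | ]; last first.
  by case/orP => /andP[/eqP <- /eqP <-] k; rewrite /freq ?subrK subrr ?add0r ?subrr.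
have := F0 a1; have := F0 a2; rewrite /freq -!val_eqE /= !eqxx.
move: (val a1) (val a1') (val a2) (val a2') => x1 x1' x2 x2'.
rewrite [x2 == x1]eq_sym.
by case: (x1 =P x1') => ?; case: (x2 =P x2') => ?; case: (x1 =P x2') => ?;
  case: (x2 =P x1') => ?; case: (x1 =P x2) => ? /=; lia.
Qed.

End Pairing.

Section Bipartite.
Variable R : realType.
Local Notation C := R[i].

Lemma sum_pair (I J : finType) (F : I * J -> C) :
  \sum_p F p = \sum_i \sum_j F (i, j).
Proof. by rewrite pair_bigA; apply: eq_bigr => -[]. Qed.

Lemma ketbra_unbiased (n : nat) (phi : nat -> R) (a a' : 'I_n) :
  ketbra (unbiased phi) a a' = n%:R^-1 * expi (phi a - phi a').
Proof.
rewrite /ketbra /unbiased rmorphM fmorphV /= conj_expi complexr0.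
rewrite conj_Creal ?ger0_real ?ler0c ?sqrtr_ge0 //.
rewrite mulrACA -expiD -invfM -rmorphM -expr2 sqr_sqrtr ?ler0n // rmorph_nat.
by rewrite mulrC.
Qed.

Lemma tr_ptr1_sqr (I J : finType) (rho : op R (I * J)%type) :
  tr (opmul (ptr1 rho) (ptr1 rho))
  = \sum_b \sum_b' \sum_a1 \sum_a2 rho (a1, b) (a1, b') * rho (a2, b') (a2, b).
Proof.
apply: eq_bigr => b _; apply: eq_bigr => b' _.
by rewrite mulr_suml; under eq_bigr do rewrite mulr_sumr.
Qed.

Lemma tr_sqr_prod (I J : finType) (rho : op R (I * J)%type) :
  tr (opmul rho rho)
  = \sum_b \sum_b' \sum_a1 \sum_a2 rho (a2, b) (a1, b') * rho (a1, b') (a2, b).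
Proof.
rewrite /tr /opmul sum_pair exchange_big; apply: eq_bigr => b _.
under eq_bigr do rewrite sum_pair.
by rewrite exchange_big; under eq_bigr do rewrite exchange_big; rewrite exchange_big.
Qed.

Section Channel.
Variables (dA dB : nat) (rho : op R ('I_dA * 'I_dB)%type).

Definition TBof (X : op R 'I_dA) : op R 'I_dB := ptr1 (opmul (tens X (@idop R _)) rho).

Lemma TBofE (X : op R 'I_dA) (b b' : 'I_dB) :
  TBof X b b' = \sum_a \sum_a' X a a' * rho (a', b) (a, b').
Proof.
rewrite /TBof /ptr1 /opmul; apply: eq_bigr => a _; rewrite sum_pair; apply: eq_bigr => a' _.
by under eq_bigr do rewrite /tens /idop /= mulrAC; rewrite sum_mul_eq.
Qed.

Lemma tr_TBof_unbiased_sqr (phi : nat -> R) :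
  (let T := TBof (ketbra (unbiased phi)) in tr (opmul T T))
  = \sum_(i : 'I_dB * 'I_dB * 'I_dA * 'I_dA * 'I_dA * 'I_dA)
      (dA%:R^-1 ^+ 2 * let: (b, b', a1, a1', a2, a2') := i in
                        rho (a1', b) (a1, b') * rho (a2', b') (a2, b))
      * expi (phase_comb dA (let: (_, _, a1, a1', a2, a2') := i in freq a1 a1' a2 a2') phi).
Proof.
rewrite !sum_pair; apply: eq_bigr => b _; apply: eq_bigr => b' _.
rewrite !TBofE mulr_suml; apply: eq_bigr => a1 _; rewrite mulr_suml; apply: eq_bigr => a1' _.
rewrite mulr_sumr; apply: eq_bigr => a2 _; rewrite mulr_sumr; apply: eq_bigr => a2' _.
by rewrite phase_comb_freq expiD !ketbra_unbiased; ring.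
Qed.

Lemma avg_tr_TBof_unbiased_sqr :
  (dA ^ 2)%:R * cphase_avg dA (fun phi =>
    let T := TBof (ketbra (unbiased phi)) in tr (opmul T T))
  = tr (opmul (ptr1 rho) (ptr1 rho)) + tr (opmul rho rho)
    - \sum_a \sum_b \sum_b' rho (a, b) (a, b') * rho (a, b') (a, b).
Proof.
rewrite (funext tr_TBof_unbiased_sqr) cphase_avg_expi.
under eq_bigr do rewrite -mulrA; rewrite -mulr_sumr; set S := (X in _ * (_ * X) = _).
have -> : (dA ^ 2)%:R * (dA%:R^-1 ^+ 2 * S) = S.
  have [dA0|dA_gt0] := posnP dA.
    by subst dA; rewrite /S big1 ?mulr0 // => -[[[[[? ?] []]]]].
  by rewrite mulrA natrX -exprMn mulfV ?expr1n ?mul1r // pnatr_eq0 -lt0n.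
rewrite /S !sum_pair /=.
under eq_bigr do under eq_bigr do under eq_bigr do under eq_bigr do
  under eq_bigr do under eq_bigr do rewrite freq_eq0.
under eq_bigr do under eq_bigr do rewrite sum_pairing.
under eq_bigr do rewrite sumrB big_split; rewrite sumrB big_split /=.
rewrite tr_ptr1_sqr tr_sqr_prod; congr (_ + _ - _).
by rewrite [RHS]exchange_big; apply: eq_bigr => b _; rewrite exchange_big.
Qed.

End Channel.
End Bipartite.

Section Purity.
Variable R : realType.
Local Notation C := R[i].

(* Tr (M M^* )^2 = Tr (M^* M)^2: for the coefficient matrix M of a pure state
   this is the equality of the purities of complementary marginals. *)
Lemma tr_gram_sqr_swap (X Y : finType) (M : X -> Y -> C) :
  \sum_x \sum_x' (\sum_y M x y * (M x' y)^*) * (\sum_y M x' y * (M x y)^*)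
  = \sum_y \sum_y' (\sum_x M x y * (M x y')^*) * (\sum_x M x y' * (M x y)^*).
Proof.
have prod_sum (I J : finType) (f : I -> C) (g : J -> C) :
    (\sum_i f i) * (\sum_j g j) = \sum_i \sum_j f i * g j.
  by rewrite mulr_suml; under eq_bigr do rewrite mulr_sumr.
under eq_bigr do under eq_bigr do rewrite prod_sum.
under [RHS]eq_bigr do under eq_bigr do rewrite prod_sum.
under [RHS]eq_bigr do rewrite exchange_big; rewrite [RHS]exchange_big.
under [RHS]eq_bigr do under eq_bigr do rewrite exchange_big.
under [RHS]eq_bigr do rewrite exchange_big.
by do 4!(apply: eq_bigr => ? _); ring.
Qed.

Lemma ptr1_tens_proj (I J : finType) (X : op R (I * J)%type) (j : I) (c c' : J) :
  ptr1 (opmul (tens (Defs.proj R j) (@idop R _)) X) c c' = X (j, c) (j, c').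
Proof.
rewrite /ptr1 /opmul (bigD1 j) //= [X in _ + X]big1 ?addr0; last first.
  move=> a /negbTE naj; apply: big1 => p _.
  by rewrite /tens /Defs.proj naj !mul0r.
rewrite (bigD1 (j, c)) //= /tens /Defs.proj /idop /= !eqxx !mul1r big1 ?addr0 // => -[a c''] /=.
rewrite xpair_eqE negb_and => /orP[/negbTE -> | ]; first by rewrite !mul0r.
by rewrite eq_sym => /negbTE ->; rewrite mulr0 mul0r.
Qed.

Section Tripartite.
Variables (dA dB dC : nat) (Psi : ('I_dA * 'I_dB * 'I_dC)%type -> C).

Lemma tr_rhoC_sqr :
  tr (opmul (rhoC Psi) (rhoC Psi)) = tr (opmul (rhoAB Psi) (rhoAB Psi)).
Proof.
have rhoCE c c' : rhoC Psi c c' = \sum_x Psi (x, c) * (Psi (x, c'))^* by rewrite sum_pair.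
rewrite /tr /opmul; under eq_bigr do under eq_bigr do rewrite !rhoCE.
by rewrite -(tr_gram_sqr_swap (fun x c => Psi (x, c))).
Qed.

Lemma HQE : HQ Psi = tr (opmul (rhoAB Psi) (rhoAB Psi))
  - \sum_a \sum_b \sum_b' rhoAB Psi (a, b) (a, b') * rhoAB Psi (a, b') (a, b).
Proof.
rewrite /HQ tr_rhoC_sqr; congr (_ - _); apply: eq_bigr => j _ /=.
have -> : ptr1 (opmul (tens (Defs.proj R j) (@idop R _)) (rhoAC Psi))
    = fun c c' => rhoAC Psi (j, c) (j, c').
  by apply/funext => c; apply/funext => c'; rewrite ptr1_tens_proj.
exact: (esym (tr_gram_sqr_swap (fun b c => Psi (j, b, c)))).
Qed.

End Tripartite.
End Purity.

Theorem lemma1 (R : realType) (dA dB dC : nat)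
    (Psi : (('I_dA * 'I_dB) * 'I_dC)%type -> R[i]) :
  normalized Psi ->
  (dA ^ 2)%:R *
    cphase_avg dA (fun phi =>
      let T := TB Psi (ketbra (@unbiased R dA phi)) in tr (opmul T T))
  = tr (opmul (rhoB Psi) (rhoB Psi)) + HQ Psi.
Proof.
move=> _.
by rewrite (avg_tr_TBof_unbiased_sqr (rhoAB Psi)) HQE addrA.
Qed.
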